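(* Let $\mathbf{J}\in\mathbb{R}^{n\times n}$ be a real symmetric matrix with zero diagonal, let $\alpha,\beta>0$, and define $\mathcal{E}(\boldsymbol{x})=-\frac12\boldsymbol{x}^\top\mathbf{J}\boldsymbol{x}$, $\mathcal{A}(\boldsymbol{x})=\frac{\beta}{4}\sum_i x_i^4-\frac{\alpha}{2}\sum_i x_i^2$ and $\mathcal{H}=\mathcal{A}+\mathcal{E}$ on $\mathbb{R}^n$. Suppose $\boldsymbol{x}^*$ is a minimizer of $\mathcal{H}$ over $\mathbb{R}^n$ and $\boldsymbol{x}^*\in\{-\lambda,\lambda\}^n$ for some $\lambda>0$. Then $\mathrm{sign}(\boldsymbol{x}^* )$ (componentwise sign) is a minimizer of $\mathcal{E}$ over $\{-1,+1\}^n$. *)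

From mathcomp Require Import all_boot all_order all_algebra.
From mathcomp Require Import reals.
Set Implicit Arguments. Unset Strict Implicit. Unset Printing Implicit Defensive.
Import Order.TTheory GRing.Theory Num.Theory.
Local Open Scope ring_scope.

Definition Eising (R : realType) (n : nat) (J : 'M[R]_n) (x : 'cV[R]_n) : R :=
  - (1 / 2) * (x^T *m J *m x) 0 0.

Definition Aniso (R : realType) (n : nat) (alpha beta : R) (x : 'cV[R]_n) : R :=
  beta / 4 * (\sum_(i < n) x i 0 ^+ 4) - alpha / 2 * (\sum_(i < n) x i 0 ^+ 2).

Definition Ham (R : realType) (n : nat) (J : 'M[R]_n) (alpha beta : R)
  (x : 'cV[R]_n) : R := Aniso alpha beta x + Eising J x.

Definition sgvec (R : realType) (n : nat) (x : 'cV[R]_n) : 'cV[R]_n :=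
  \col_i Num.sg (x i 0).

Definition is_spin (R : realType) (n : nat) (s : 'cV[R]_n) : Prop :=
  forall i, s i 0 = 1 \/ s i 0 = -1.

From mathcomp Require Import all_boot all_order all_algebra.
From mathcomp Require Import reals.
Import Order.TTheory GRing.Theory Num.Theory.
Local Open Scope ring_scope.

(* On a scaled spin configuration [c *: s] the anisotropy [Aniso] only depends
   on [c], while [Eising] is homogeneous of degree 2.  Hence comparing the
   minimal value [Ham xs = Ham (lambda *: sgvec xs)] with [Ham (lambda *: s)]
   leaves [lambda ^+ 2 * Eising (sgvec xs) <= lambda ^+ 2 * Eising s]. *)

Section ScaledSpins.

Set Implicit Arguments.

Variables (R : realType) (n : nat) (J : 'M[R]_n) (alpha beta : R).

Lemma EisingZ (c : R) (x : 'cV[R]_n) :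
  Eising J (c *: x) = c ^+ 2 * Eising J x.
Proof.
rewrite /Eising [(c *: x)^T]linearZ /= -!scalemxAl -scalemxAr scalerA !mxE expr2.
by rewrite mulrCA mulrA.
Qed.

Lemma spin_sqr (s : 'cV[R]_n) i : is_spin s -> s i 0 ^+ 2 = 1.
Proof. by move=> /(_ i) [] ->; rewrite ?sqrrN expr1n. Qed.

Lemma Aniso_scaled_spin (c : R) (s : 'cV[R]_n) :
  is_spin s ->
  Aniso alpha beta (c *: s) = (beta / 4 * c ^+ 4 - alpha / 2 * c ^+ 2) *+ n.
Proof.
move=> s_spin; rewrite /Aniso.
have sq i : (c *: s) i 0 ^+ 2 = c ^+ 2 by rewrite mxE exprMn spin_sqr ?mulr1.
have qu i : (c *: s) i 0 ^+ 4 = c ^+ 4.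
  by rewrite (_ : 4 = 2 * 2)%N // !exprM sq.
under eq_bigr do rewrite qu.
under [X in _ - _ * X]eq_bigr do rewrite sq.
by rewrite !sumr_const card_ord mulrnBl -!mulrnAr.
Qed.

Lemma sgvec_spin (x : 'cV[R]_n) :
  (forall i, x i 0 != 0) -> is_spin (sgvec x).
Proof.
move=> x_neq0 i; rewrite mxE.
by case: (ltrgt0P (x i 0)) (x_neq0 i) => [/gtr0_sg|/ltr0_sg|->]; [left|right|].
Qed.

Lemma scale_sgvec (x : 'cV[R]_n) (lambda : R) :
  (forall i, `|x i 0| = lambda) -> x = lambda *: sgvec x.
Proof.
move=> x_norm; apply/matrixP => i j; rewrite (ord1 j) !mxE -(x_norm i).
by rewrite mulrC -numEsg.
Qed.

Lemma scaled_spin_min_Eising (lambda : R) (t : 'cV[R]_n) :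
  lambda != 0 -> is_spin t ->
  (forall y : 'cV[R]_n, Ham J alpha beta (lambda *: t) <= Ham J alpha beta y) ->
  forall s : 'cV[R]_n, is_spin s -> Eising J t <= Eising J s.
Proof.
move=> lambda_neq0 t_spin t_min s s_spin.
have := t_min (lambda *: s).
rewrite /Ham !Aniso_scaled_spin // lerD2l !EisingZ.
by rewrite ler_pM2l // exprn_even_gt0.
Qed.

End ScaledSpins.

Theorem propositionS5 (R : realType) (n : nat) (J : 'M[R]_n) (alpha beta lambda : R)
  (xs : 'cV[R]_n) :
  J^T = J ->
  (forall i, J i i = 0) ->
  0 < alpha -> 0 < beta ->
  (forall y : 'cV[R]_n, Ham J alpha beta xs <= Ham J alpha beta y) ->
  0 < lambda ->
  (forall i, xs i 0 = lambda \/ xs i 0 = - lambda) ->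
  is_spin (sgvec xs) /\
  (forall s : 'cV[R]_n, is_spin s -> Eising J (sgvec xs) <= Eising J s).
Proof.
move=> _ _ _ _ xs_min lambda_gt0 xs_pm.
have xs_norm i : `|xs i 0| = lambda.
  by case: (xs_pm i) => ->; rewrite ?normrN gtr0_norm.
have xs_spin : is_spin (sgvec xs).
  apply: sgvec_spin => i; rewrite -normr_eq0 xs_norm.
  exact: lt0r_neq0.
split=> //; apply: (scaled_spin_min_Eising J alpha beta _ (lt0r_neq0 lambda_gt0) xs_spin).
by rewrite -scale_sgvec.
Qed.
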